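(* Let $W_1(u)=\sum_{k\ge0}\omega_ku^{-k}$. Let $A'\in\mathrm{Seq}_{r,t}$ with $a'_1=-1$, $a'_2=1$. Then in $\operatorname{End}(A')[[u^{-1}]]$ $$e_1^{(A')}\frac{1}{u-y_1}e_1^{(A')}=\frac{W_1^*(u)}{u}e_1^{(A')},\qquad\text{where}\qquad \frac{W^*_1(u)}{u}=\frac{W_1(-u)}{u-W_1(-u)}.$$
   Context: Let $r,t\in\mathbb N$. An $(r,t)$-sequence is a sequence $A=(a_1,\dots,a_{r+t})$ that is a permutation of $(1,\dots,1,-1,\dots,-1)$ ($r$ entries $1$, $t$ entries $-1$); $\mathrm{Seq}_{r,t}$ is the set of these, and the simple transpositions $\mathsf s_j=(j,j+1)$ of $S_{r+t}$ act on it by permuting entries. Fix complex numbers $\boldsymbol\omega=(\omega_k)_{k\in\mathbb N}$. The degenerate affine walled Brauer category $\underline{\mathrm{VB}}_{r,t}(\boldsymbol\omega)$ is the $\mathbb C$-linear category with object set $\mathrm{Seq}_{r,t}$ whose morphisms are generated by: endomorphisms $s_i^{(A)}$ of $A$ for $1\le i\le r+t-1$ with $a_i=a_{i+1}$; endomorphisms $e_i^{(A)}$ of $A$ for $1\le i\le r+t-1$ with $a_i\neq a_{i+1}$; endomorphisms $y_i^{(A)}$ of $A$ for $1\le i\le r+t$; and morphisms $\hat s_j^{(A)},\hat e_j^{(A)}:A\to\mathsf s_jA$ whenever $\mathsf s_jA\ne A$. Superscripts are usually omitted; composition $fg$ means $g$ first. A symbol $\dot s_i$ stands for $s_i$ or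 $\hat s_i$ and $\dot e_i$ for $e_i$ or $\hat e_i$; each relation is imposed for all objects and all choices of dotted symbols (possibly different on the two sides) for which both sides are defined morphisms with the same source and target. Relations: (1) $\dot s_i\dot s_i=1$; (2) $\dot s_i\dot s_j=\dot s_j\dot s_i$ for $|i-j|>1$, $\dot s_i\dot s_{i+1}\dot s_i=\dot s_{i+1}\dot s_i\dot s_{i+1}$, $\dot s_iy_j=y_j\dot s_i$ for $j\ne i,i+1$; (3) $(e_i^{(A)})^2=\omega_0e_i^{(A)}$; (4) $e_1^{(A)}y_1^ke_1^{(A)}=\omega_ke_1^{(A)}$ for all $k\in\mathbb N$ when $a_1=1,a_2=-1$; (5) $\dot s_i\dot e_j=\dot e_j\dot s_i$ and $\dot e_i\dot e_j=\dot e_j\dot e_i$ for $|i-j|>1$, $\dot e_iy_j=y_j\dot e_i$ for $j\neq i,i+1$, $y_iy_j=y_jy_i$; (6) $\hat s_i\dot e_i=\dot e_i=\dot e_i\hat s_i$, $\dot s_i\dot e_{i+1}\dot e_i=\dot s_{i+1}\dot e_i$, $\dot e_i\dot e_{i+1}\dot s_i=\dot e_i\dot s_{i+1}$, $\dot e_{i+1}\dot e_i\dot s_{i+1}=\dot e_{i+1}\dot s_i$, $\dot s_{i+1}\dot e_i\dot e_{i+1}=\dot s_i\dot e_{i+1}$, $\dot e_{i+1}\dot e_i\dot e_{i+1}=\dot e_{i+1}$, $\dot e_i\dot e_{i+1}\dot e_i=\dot e_i$; (7) $s_iy_i-y_{i+1}s_i=-1$, $s_iy_{i+1}-y_is_i=1$,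 $\hat s_iy_i-y_{i+1}\hat s_i=\hat e_i$, $\hat s_iy_{i+1}-y_i\hat s_i=-\hat e_i$; (8) $\dot e_i(y_i+y_{i+1})=0=(y_i+y_{i+1})\dot e_i$. Power series: $u$ is a formal variable; one works in $\operatorname{End}(A)[[u^{-1}]]$, with $\frac1{u-y}:=\sum_{k\ge0}y^ku^{-k-1}$; $f(-u)$ denotes substitution $u\mapsto-u$, and quotients are expanded as power series in $u^{-1}$. *)

From HB Require Import structures.
From mathcomp Require Import all_boot all_order all_algebra.
From Stdlib Require List.
Set Implicit Arguments. Unset Strict Implicit. Unset Printing Implicit Defensive.
Import Order.TTheory GRing.Theory Num.Theory.
Local Open Scope ring_scope.

(* Objects: (r,t)-sequences.  An entry 1 is encoded by [true], an entry   *)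
(* -1 by [false].  Indices are 1-based as in the paper.                    *)

Definition inSeq (r t : nat) (A : seq bool) : bool :=
  (count (fun b : bool => b) A == r) && (count negb A == t).

Definition ent (A : seq bool) (i : nat) : bool := nth false A i.-1.

Definition swapseq (i : nat) (A : seq bool) : seq bool :=
  set_nth false (set_nth false A i.-1 (ent A i.+1)) i (ent A i).

(* Generators.  [gsym] are the actual generators (for a given source     *)
(* object): GS i = s_i, GSh i = \hat s_i, GE i = e_i, GEh i = \hat e_i,   *)
(* GY j = y_j.                                                            *)

Inductive gsym : Type :=
  | GS of nat | GSh of nat | GE of nat | GEh of nat | GY of nat.

Definition gdef (g : gsym) (A : seq bool) : bool :=
  match g with
  | GS i => (0 < i < size A)%N && (ent A i == ent A i.+1)
  | GSh i => (0 < i < size A)%N && (ent A i != ent A i.+1)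
  | GE i => (0 < i < size A)%N && (ent A i != ent A i.+1)
  | GEh i => (0 < i < size A)%N && (ent A i != ent A i.+1)
  | GY j => (0 < j <= size A)%N
  end.

Definition gtgt (g : gsym) (A : seq bool) : seq bool :=
  match g with
  | GSh i | GEh i => swapseq i A
  | _ => A
  end.

(* Symbols appearing in relations: plain ones, plus the dotted ones
   DSd i (= \dot s_i, standing for s_i or \hat s_i) and
   DEd i (= \dot e_i, standing for e_i or \hat e_i). *)
Inductive dsym : Type :=
  | DS of nat | DSh of nat | DSd of nat
  | DE of nat | DEh of nat | DEd of nat | DY of nat.

Definition resolve (x : dsym) : seq gsym :=
  match x with
  | DS i => [:: GS i]
  | DSh i => [:: GSh i]
  | DSd i => [:: GS i; GSh i]
  | DE i => [:: GE i]
  | DEh i => [:: GEh i]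
  | DEd i => [:: GE i; GEh i]
  | DY j => [:: GY j]
  end.

Definition resolve_word (w : seq dsym) : seq (seq gsym) :=
  foldr (fun x acc => [seq g :: v | g <- resolve x, v <- acc]) [:: [::]] w.

(* all choices for the dotted symbols of a linear combination of words
   (each occurrence chosen independently) *)
Definition resolve_comb (F : Type) (c : seq (F * seq dsym))
  : seq (seq (F * seq gsym)) :=
  foldr (fun p acc => [seq (p.1, v) :: rest | v <- resolve_word p.2, rest <- acc])
        [:: [::]] c.

Section Model.
Variables (F : numClosedFieldType) (R : algType F).
Variables (idem : seq bool -> R) (gen : gsym -> seq bool -> R).

(* Evaluation of a word [x1; ...; xk] (meaning the composite x1 ... xk,
   xk applied first) starting at the source object A: returns the target
   object and the morphism, or None if some generator is undefined. *)
Fixpoint evalw (A : seq bool) (w : seq gsym) : option (seq bool * R) :=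
  match w with
  | [::] => Some (A, idem A)
  | x :: w' =>
      match evalw A w' with
      | Some (B, m) => if gdef x B then Some (gtgt x B, gen x B * m) else None
      | None => None
      end
  end.

Definition ends_at (A B : seq bool) (w : seq gsym) : bool :=
  if evalw A w is Some (B', _) then B' == B else false.

Definition combval (A : seq bool) (L : seq (F * seq gsym)) : R :=
  \sum_(p <- L) p.1 *: oapp snd 0 (evalw A p.2).

(* The relation  lhs = rhs  is imposed at the source object A for all
   choices of dotted symbols for which all terms are defined morphisms
   with source A and one common target B. *)
Definition rel_holds (A : seq bool) (lhs rhs : seq (F * seq dsym)) : Prop :=
  forall L, List.In L (resolve_comb lhs) -> forall Rr, List.In Rr (resolve_comb rhs) ->
  forall B, all (fun p => ends_at A B p.2) (L ++ Rr) ->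
  combval A L = combval A Rr.

End Model.

(* A model of the degenerate affine walled Brauer category VB_{r,t}(omega) *)
(* inside an F-algebra R: the object A is represented by an idempotent    *)
(* idem A, a morphism A -> B by an element m with m = idem B * m * idem A, *)
(* composition by multiplication.  gen g A is the generator g^{(A)}.      *)

Definition one_ (F : numClosedFieldType) (w : seq dsym) : seq (F * seq dsym) :=
  [:: (1, w)].

Record is_VB_model (F : numClosedFieldType) (R : algType F) (r t : nat)
    (om : nat -> F) (idem : seq bool -> R) (gen : gsym -> seq bool -> R) : Prop :=
  { idem_idem : forall A, inSeq r t A -> idem A * idem A = idem A;
    idem_orth : forall A B, inSeq r t A -> inSeq r t B -> A != B ->
                  idem A * idem B = 0;
    gen_hom : forall g A, inSeq r t A -> gdef g A ->
                  gen g A = idem (gtgt g A) * gen g A * idem A;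
    rel1 : forall A i, inSeq r t A ->
      rel_holds idem gen A (one_ F [:: DSd i; DSd i]) (one_ F [::]);
    rel2a : forall A i j, inSeq r t A -> (i.+1 < j)%N || (j.+1 < i)%N ->
      rel_holds idem gen A (one_ F [:: DSd i; DSd j]) (one_ F [:: DSd j; DSd i]);
    rel2b : forall A i, inSeq r t A ->
      rel_holds idem gen A (one_ F [:: DSd i; DSd i.+1; DSd i])
                           (one_ F [:: DSd i.+1; DSd i; DSd i.+1]);
    rel2c : forall A i j, inSeq r t A -> j != i -> j != i.+1 ->
      rel_holds idem gen A (one_ F [:: DSd i; DY j]) (one_ F [:: DY j; DSd i]);
    rel3 : forall A i, inSeq r t A ->
      rel_holds idem gen A (one_ F [:: DE i; DE i]) [:: (om 0%N, [:: DE i])];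
    rel4 : forall A k, inSeq r t A -> ent A 1 = true -> ent A 2 = false ->
      rel_holds idem gen A (one_ F ([:: DE 1] ++ nseq k (DY 1) ++ [:: DE 1]))
                           [:: (om k, [:: DE 1])];
    rel5a : forall A i j, inSeq r t A -> (i.+1 < j)%N || (j.+1 < i)%N ->
      rel_holds idem gen A (one_ F [:: DSd i; DEd j]) (one_ F [:: DEd j; DSd i]);
    rel5b : forall A i j, inSeq r t A -> (i.+1 < j)%N || (j.+1 < i)%N ->
      rel_holds idem gen A (one_ F [:: DEd i; DEd j]) (one_ F [:: DEd j; DEd i]);
    rel5c : forall A i j, inSeq r t A -> j != i -> j != i.+1 ->
      rel_holds idem gen A (one_ F [:: DEd i; DY j]) (one_ F [:: DY j; DEd i]);
    rel5d : forall A i j, inSeq r t A ->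
      rel_holds idem gen A (one_ F [:: DY i; DY j]) (one_ F [:: DY j; DY i]);
    rel6a : forall A i, inSeq r t A ->
      rel_holds idem gen A (one_ F [:: DSh i; DEd i]) (one_ F [:: DEd i]);
    rel6b : forall A i, inSeq r t A ->
      rel_holds idem gen A (one_ F [:: DEd i; DSh i]) (one_ F [:: DEd i]);
    rel6c : forall A i, inSeq r t A ->
      rel_holds idem gen A (one_ F [:: DSd i; DEd i.+1; DEd i])
                           (one_ F [:: DSd i.+1; DEd i]);
    rel6d : forall A i, inSeq r t A ->
      rel_holds idem gen A (one_ F [:: DEd i; DEd i.+1; DSd i])
                           (one_ F [:: DEd i; DSd i.+1]);
    rel6e : forall A i, inSeq r t A ->
      rel_holds idem gen A (one_ F [:: DEd i.+1; DEd i; DSd i.+1])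
                           (one_ F [:: DEd i.+1; DSd i]);
    rel6f : forall A i, inSeq r t A ->
      rel_holds idem gen A (one_ F [:: DSd i.+1; DEd i; DEd i.+1])
                           (one_ F [:: DSd i; DEd i.+1]);
    rel6g : forall A i, inSeq r t A ->
      rel_holds idem gen A (one_ F [:: DEd i.+1; DEd i; DEd i.+1])
                           (one_ F [:: DEd i.+1]);
    rel6h : forall A i, inSeq r t A ->
      rel_holds idem gen A (one_ F [:: DEd i; DEd i.+1; DEd i])
                           (one_ F [:: DEd i]);
    rel7a : forall A i, inSeq r t A ->
      rel_holds idem gen A [:: (1, [:: DS i; DY i]); (-1, [:: DY i.+1; DS i])]
                           [:: (-1, [::])];
    rel7b : forall A i, inSeq r t A ->
      rel_holds idem gen A [:: (1, [:: DS i; DY i.+1]); (-1, [:: DY i; DS i])]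
                           [:: (1, [::])];
    rel7c : forall A i, inSeq r t A ->
      rel_holds idem gen A [:: (1, [:: DSh i; DY i]); (-1, [:: DY i.+1; DSh i])]
                           [:: (1, [:: DEh i])];
    rel7d : forall A i, inSeq r t A ->
      rel_holds idem gen A [:: (1, [:: DSh i; DY i.+1]); (-1, [:: DY i; DSh i])]
                           [:: (-1, [:: DEh i])];
    rel8a : forall A i, inSeq r t A ->
      rel_holds idem gen A [:: (1, [:: DEd i; DY i]); (1, [:: DEd i; DY i.+1])] [::];
    rel8b : forall A i, inSeq r t A ->
      rel_holds idem gen A [:: (1, [:: DY i; DEd i]); (1, [:: DY i.+1; DEd i])] [::]
  }.

(* Power series in u^{-1}: q : nat -> F stands for sum_n q n u^{-n}.      *)

(* coefficients of W_1(-u) = sum_k omega_k (-u)^{-k} *)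
Definition W1neg (F : numClosedFieldType) (om : nat -> F) (k : nat) : F :=
  (-1) ^+ k * om k.

(* q = W_1(-u) / (u - W_1(-u)), i.e. q * (u - W_1(-u)) = W_1(-u) as
   Laurent series (coefficient of u^1 and of u^{-n} for all n). *)
Definition is_Wstar_over_u (F : numClosedFieldType) (om : nat -> F)
    (q : nat -> F) : Prop :=
  q 0%N = 0 /\
  forall n : nat,
    q n.+1 - \sum_(i < n.+1) q i * W1neg om (n - i) = W1neg om n.

(* coefficient of u^{-n} in e_1 (1/(u - y_1)) e_1 at object A:
   0 for n = 0, and e_1 y_1^k e_1 for n = k+1. *)
Definition lhs_coef (F : numClosedFieldType) (R : algType F)
    (idem : seq bool -> R) (gen : gsym -> seq bool -> R) (A : seq bool)
    (n : nat) : R :=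
  if n is k.+1 then
    oapp snd 0 (evalw idem gen A ([:: GE 1] ++ nseq k (GY 1) ++ [:: GE 1]))
  else 0.

(* Conjugation by the invertible morphism \hat s_1 : A' -> A, where A = s_1 A' begins with
   (1, -1), turns e_1^(A') into e_1^(A), and y_1^(A') into y_2 + e_1 at A, by relations (6)
   and (7).  So e_1 y_1^k e_1 at A' is conjugate to e_1 (y_2 + e_1)^k e_1 at A.  Relations
   (8) and (4) give e_1 y_2^j e_1 = (-1)^j omega_j e_1, the coefficients of W_1(-u); expanding
   (y_2 + e_1)^k along its last occurrence of e_1 yields the convolution recurrence
   q_(k+1) = [W_1(-u)]_k + sum_(i<k) q_(i+1) [W_1(-u)]_(k-1-i), which is exactly the
   expansion of W_1(-u) / (u - W_1(-u)). *)

From HB Require Import structures.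
From mathcomp Require Import all_boot all_order all_algebra.
Set Implicit Arguments. Unset Strict Implicit. Unset Printing Implicit Defensive.
Import GRing.Theory.
Local Open Scope ring_scope.

Lemma exprD_sum_last (R : pzRingType) (a b : R) (k : nat) :
  (a + b) ^+ k = a ^+ k + \sum_(j < k) (a + b) ^+ j * b * a ^+ (k - j.+1).
Proof.
elim: k => [|k IHk]; first by rewrite !expr0 big_ord0 addr0.
rewrite exprSr mulrDr {1}IHk mulrDl -exprSr big_ord_recr /= subSS subnn expr0 mulr1.
rewrite mulr_suml -addrA; congr (_ + (_ + _)).
by apply: eq_bigr => j _; rewrite subSS -mulrA -exprSr subnSK.
Qed.

Lemma Wstar_succ (F : numClosedFieldType) (om : nat -> F) (q : nat -> F) (k : nat) :
  is_Wstar_over_u om q ->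
  q k.+1 = W1neg om k + \sum_(i < k) q i.+1 * W1neg om (k - i.+1).
Proof.
case=> q0 /(_ k) /eqP; rewrite big_ord_recl q0 mul0r add0r subr_eq addrC => /eqP ->.
by congr (_ + _); apply: eq_bigr => i _; rewrite lift0.
Qed.

Lemma sandwich_exprD_Wstar (F : numClosedFieldType) (R : algType F) (om : nat -> F)
    (e y : R) (q : nat -> F) :
  (forall j, e * (y ^+ j * e) = W1neg om j *: e) -> is_Wstar_over_u om q ->
  forall k, e * ((y + e) ^+ k * e) = q k.+1 *: e.
Proof.
move=> eyje Wq; elim/ltn_ind => k IHk.
rewrite exprD_sum_last mulrDl mulrDr eyje (Wstar_succ k Wq) scalerDl; congr (_ + _).
rewrite mulr_suml mulr_sumr scaler_suml; apply: eq_bigr => i _.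
have -> : e * ((y + e) ^+ i * e * y ^+ (k - i.+1) * e)
        = e * ((y + e) ^+ i * e) * (y ^+ (k - i.+1) * e) by rewrite !mulrA.
by rewrite IHk // -scalerAl eyje scalerA.
Qed.

Fixpoint Wstar_coefs (F : numClosedFieldType) (om : nat -> F) (n : nat) : seq F :=
  if n is m.+1 then
    let s := Wstar_coefs om m in
    rcons s (W1neg om m + \sum_(i < m.+1) nth 0 s i * W1neg om (m - i))
  else [:: 0].

Lemma size_Wstar_coefs (F : numClosedFieldType) (om : nat -> F) (n : nat) :
  size (Wstar_coefs om n) = n.+1.
Proof. by elim: n => [|n IHn] //=; rewrite size_rcons IHn. Qed.

Lemma nth_Wstar_coefs (F : numClosedFieldType) (om : nat -> F) (n i : nat) :
  (i <= n)%N -> nth 0 (Wstar_coefs om n) i = nth 0 (Wstar_coefs om i) i.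
Proof.
elim: n => [|n IHn]; first by rewrite leqn0 => /eqP ->.
rewrite leq_eqVlt => /orP [/eqP -> // | lt_in].
by rewrite /= nth_rcons size_Wstar_coefs lt_in IHn.
Qed.

Lemma Wstar_exists (F : numClosedFieldType) (om : nat -> F) :
  exists q, is_Wstar_over_u om q.
Proof.
exists (fun n => nth 0 (Wstar_coefs om n) n); split => // n.
rewrite /= nth_rcons size_Wstar_coefs ltnn eqxx.
under eq_bigr => i _ do rewrite nth_Wstar_coefs -1?ltnS //.
by rewrite addrK.
Qed.

Section VBModel.
Variables (F : numClosedFieldType) (R : algType F) (r t : nat) (om : nat -> F).
Variables (idem : seq bool -> R) (gen : gsym -> seq bool -> R).
Hypothesis VB : is_VB_model r t om idem gen.

Lemma gen_idemr X g : inSeq r t X -> gdef g X -> gen g X * idem X = gen g X.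
Proof. by move=> HX Hg; rewrite (gen_hom VB HX Hg) -mulrA (idem_idem VB HX). Qed.

Lemma evalw_cons X g w B m : evalw idem gen X w = Some (B, m) -> gdef g B ->
  evalw idem gen X (g :: w) = Some (gtgt g B, gen g B * m).
Proof. by move=> Xw gB; rewrite /= Xw gB. Qed.

Lemma evalw_nseq X w B m g k : evalw idem gen X w = Some (B, m) ->
  gdef g B -> gtgt g B = B ->
  evalw idem gen X (nseq k g ++ w) = Some (B, gen g B ^+ k * m).
Proof.
move=> Xw gB gBB; elim: k => [|k IHk]; first by rewrite /= Xw expr0 mul1r.
by rewrite cat_cons (evalw_cons IHk gB) gBB exprS mulrA.
Qed.

Lemma evalw_e1_y1X_e1 X k : inSeq r t X -> gdef (GE 1) X ->
  evalw idem gen X ([:: GE 1] ++ nseq k (GY 1) ++ [:: GE 1])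
  = Some (X, gen (GE 1) X * (gen (GY 1) X ^+ k * gen (GE 1) X)).
Proof.
move=> HX e1X; have y1X : gdef (GY 1) X.
  by move: e1X => /andP[/andP[_ ?] _]; rewrite /= ltnW.
have e1_path : evalw idem gen X [:: GE 1] = Some (X, gen (GE 1) X).
  by rewrite (@evalw_cons X _ [::] X (idem X)) //= gen_idemr.
by rewrite cat1s (evalw_cons (evalw_nseq k e1_path y1X erefl) e1X).
Qed.

Lemma lhs_coef_succ X k : inSeq r t X -> gdef (GE 1) X ->
  lhs_coef idem gen X k.+1 = gen (GE 1) X * (gen (GY 1) X ^+ k * gen (GE 1) X).
Proof. by move=> HX e1X; rewrite [LHS]/lhs_coef (evalw_e1_y1X_e1 k HX e1X). Qed.

Lemma resolve_word_y1X_e1 k :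
  resolve_word (nseq k (DY 1) ++ [:: DE 1]) = [:: nseq k (GY 1) ++ [:: GE 1]].
Proof. by elim: k => [|k IHk] //=; rewrite IHk. Qed.

Variable rest : seq bool.
Local Notation A := [:: true, false & rest].
Local Notation A' := [:: false, true & rest].
Hypothesis A'_obj : inSeq r t A'.

Lemma A_obj : inSeq r t A.
Proof. by move: A'_obj; rewrite /inSeq. Qed.

Local Notation shat := (gen (GSh 1) A').
Local Notation shat' := (gen (GSh 1) A).
Local Notation ehat := (gen (GEh 1) A').
Local Notation e1 := (gen (GE 1) A).
Local Notation e1' := (gen (GE 1) A').
Local Notation y1 := (gen (GY 1) A).
Local Notation y2 := (gen (GY 2) A).
Local Notation y1' := (gen (GY 1) A').

Tactic Notation "relation_at" uconstr(rel) uconstr(L) uconstr(Rr) uconstr(B) :=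
  have := rel L _ Rr _ B;
  rewrite /combval /= !big_cons !big_nil /= ?scaleN1r !scale1r !addr0 !gen_idemr //;
  apply => //=; [tauto | tauto | by rewrite /ends_at /= eqxx].

Lemma shat'_ehat : shat' * ehat = e1'.
Proof.
by relation_at (rel6a VB (i := 1) A'_obj) [:: (1, [:: GSh 1; GEh 1])] [:: (1, [:: GE 1])] A'.
Qed.

Lemma e1_shat : e1 * shat = ehat.
Proof.
by relation_at (rel6b VB (i := 1) A'_obj) [:: (1, [:: GE 1; GSh 1])] [:: (1, [:: GEh 1])] A.
Qed.

Lemma shat_shat' : shat * shat' = idem A.
Proof.
by relation_at (rel1 VB (i := 1) A_obj) [:: (1, [:: GSh 1; GSh 1])] [:: (1, [::])] A.
Qed.

Lemma shat_y1' : shat * y1' - y2 * shat = ehat.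
Proof.
by relation_at (rel7c VB (i := 1) A'_obj)
  [:: (1, [:: GSh 1; GY 1]); (-1, [:: GY 2; GSh 1])] [:: (1, [:: GEh 1])] A.
Qed.

Lemma e1_y1Dy2 : e1 * y1 + e1 * y2 = 0.
Proof.
by relation_at (rel8a VB (i := 1) A_obj)
  [:: (1, [:: GE 1; GY 1]); (1, [:: GE 1; GY 2])] [::] A.
Qed.

Lemma y1_y2_comm : GRing.comm y1 y2.
Proof.
by relation_at (rel5d VB (i := 1) (j := 2) A_obj)
  [:: (1, [:: GY 1; GY 2])] [:: (1, [:: GY 2; GY 1])] A.
Qed.

Lemma e1_y1X_e1 k : e1 * (y1 ^+ k * e1) = om k *: e1.
Proof.
have e1_y1X_e1_path := evalw_e1_y1X_e1 k A_obj (erefl : gdef (GE 1) A).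
have := rel4 VB (k := k) A_obj erefl erefl
  (L := [:: (1, [:: GE 1] ++ nseq k (GY 1) ++ [:: GE 1])]) _
  (Rr := [:: (om k, [:: GE 1])]) _ (B := A).
rewrite /combval !big_cons !big_nil e1_y1X_e1_path /= scale1r !addr0 gen_idemr //.
apply => /=; rewrite ?resolve_word_y1X_e1 /=; try tauto.
by rewrite /ends_at e1_y1X_e1_path /= !eqxx.
Qed.

Lemma shat_y1'X_shat' k : shat * y1' ^+ k * shat' = (y2 + e1) ^+ k * idem A.
Proof.
have shat_y1 : shat * y1' = (y2 + e1) * shat by rewrite mulrDl e1_shat -shat_y1' addrC subrK.
elim: k => [|k IHk]; first by rewrite expr0 mulr1 shat_shat' mul1r.
by rewrite exprS mulrA shat_y1 -!mulrA (mulrA shat) IHk exprS mulrA.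
Qed.

Lemma e1_y2X j : e1 * y2 ^+ j = (-1) ^+ j *: (e1 * y1 ^+ j).
Proof.
have e1_y2 : e1 * y2 = - (e1 * y1) by apply/eqP; rewrite -addr_eq0 addrC e1_y1Dy2.
elim: j => [|j IHj]; first by rewrite !expr0 scale1r.
have y2_y1X : GRing.comm y2 (y1 ^+ j) by apply/commrX/commr_sym/y1_y2_comm.
rewrite exprSr mulrA IHj -scalerAl -mulrA -y2_y1X mulrA e1_y2 mulNr -mulrA -exprS.
by rewrite [(-1) ^+ j.+1]exprS mulN1r scaleNr scalerN.
Qed.

Lemma e1_y2X_e1 j : e1 * (y2 ^+ j * e1) = W1neg om j *: e1.
Proof. by rewrite mulrA e1_y2X -scalerAl -mulrA e1_y1X_e1 scalerA. Qed.

Lemma e1'_y1'X_e1' q : is_Wstar_over_u om q -> forall k,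
  e1' * (y1' ^+ k * e1') = q k.+1 *: e1'.
Proof.
move=> Wq k; rewrite -shat'_ehat -e1_shat.
have -> : shat' * (e1 * shat) * (y1' ^+ k * (shat' * (e1 * shat)))
        = shat' * (e1 * ((shat * y1' ^+ k * shat') * e1)) * shat by rewrite !mulrA.
have idem_e1 : idem A * e1 = e1.
  by rewrite (gen_hom VB (g := GE 1) A_obj erefl) !mulrA (idem_idem VB A_obj).
rewrite shat_y1'X_shat' -(mulrA _ (idem A)) idem_e1.
by rewrite (sandwich_exprD_Wstar e1_y2X_e1 Wq) -scalerAr scalerAl mulrA -!scalerAl.
Qed.

End VBModel.

Theorem mainTheorem3 (F : numClosedFieldType) (R : algType F) (r t : nat)
    (om : nat -> F) (idem : seq bool -> R) (gen : gsym -> seq bool -> R)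
    (A' : seq bool) :
  is_VB_model r t om idem gen ->
  inSeq r t A' -> ent A' 1 = false -> ent A' 2 = true ->
  (exists q, is_Wstar_over_u om q) /\
  (forall q, is_Wstar_over_u om q ->
     forall n : nat, lhs_coef idem gen A' n = q n *: gen (GE 1) A').
Proof.
move=> VB A'_obj a'1 a'2; split=> [|q Wq]; first exact: Wstar_exists.
case: A' A'_obj a'1 a'2 => [|a [|b rest]] // A'_obj; rewrite /ent /= => a_false b_true; subst a b.
case=> [|k]; first by case: Wq => -> _; rewrite scale0r.
rewrite (lhs_coef_succ VB k A'_obj erefl).
exact: (e1'_y1'X_e1' VB A'_obj Wq k).
Qed.
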